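(* Let $b>1$, $p\ge1$, $R\subseteq\{0,\ldots,p-1\}$, and $I\subseteq\mathbb{N}$ finite and non-empty. The initial state of $\mathcal{C}_{R,p,I}$ is not ultimately-equivalent to any other state of $\mathcal{C}_{R,p,I}$.
   Context: $A_b=\{0,\ldots,b-1\}$. $\mathcal{A}_{R,p}$: states $\{0,\ldots,p-1\}$, initial $0$, final $R$, transitions $n\xrightarrow{a}(nb+a)\bmod p$. With $m=\max I$, $\mathcal{B}_I$: states $\{0,\ldots,m\}\cup\{\bot\}$, initial $0$, final $I$, transitions $i\xrightarrow{a}ib+a$ if $ib+a\le m$, else $i\xrightarrow{a}\bot$, and $\bot\xrightarrow{a}\bot$. $\mathcal{C}_{R,p,I}$ is the accessible part (states reachable from the initial state $(0,0)$) of the product of $\mathcal{A}_{R,p}$ and $\mathcal{B}_I$, with componentwise transitions and $(s,t)$ final iff exactly one of $s\in R$, $t\in I$ holds. Two states $x,y$ are ultimately-equivalent if there is $m\ge1$ with $x\cdot u=y\cdot u$ for all words $u$ with $|u|\ge m$. *)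

From mathcomp Require Import all_boot.
Set Implicit Arguments. Unset Strict Implicit. Unset Printing Implicit Defensive.

(* Alphabet A_b = {0,...,b-1}; words are sequences of naturals, a word u is
   over A_b when all its letters are < b. *)
Definition word_over (b : nat) (u : seq nat) : bool := all (fun a => a < b) u.

#[local] Unset Implicit Arguments.
Record DFA := mkDFA {
  st : Type;
  init : st;
  trans : st -> nat -> st;
  final : st -> bool }.
#[local] Set Implicit Arguments.

Definition run (A : DFA) (x : st A) (u : seq nat) : st A := foldl (trans A) x u.

(* A_{R,p}: states {0..p-1}, n --a--> (n b + a) mod p, final R. *)
Definition A_trans (b p : nat) (n a : nat) : nat := (n * b + a) %% p.

(* B_I: states {0..m} u {bot} (bot = None), m = max I. *)
Definition maxI (I : seq nat) : nat := \max_(i <- I) i.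
Definition B_trans (b : nat) (I : seq nat) (t : option nat) (a : nat) : option nat :=
  match t with
  | Some i => if i * b + a <= maxI I then Some (i * b + a) else None
  | None => None
  end.

Definition C_prod (b : nat) (R : seq nat) (p : nat) (I : seq nat) : DFA :=
  @mkDFA (nat * option nat) (0, Some 0)
    (fun x a => (A_trans b p x.1 a, B_trans b I x.2 a))
    (fun x => (x.1 \in R) (+) (match x.2 with Some i => i \in I | None => false end)).

(* Accessible part of an automaton over A_b: states reachable from the
   initial state by a word over A_b.  Transitions of the accessible part are
   the restrictions of those of the full automaton. *)
Definition accessible (b : nat) (A : DFA) (x : st A) : Prop :=
  exists u, word_over b u /\ @run A (init A) u = x.

Definition ult_equiv (b : nat) (A : DFA) (x y : st A) : Prop :=
  exists m, 1 <= m /\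
    forall u, word_over b u -> m <= size u -> @run A x u = @run A y u.

(* Reading the letter 0 fixes the initial state (0, 0), so an ultimately-equivalent
   state x would have to be mapped to (0, 0) by a long enough word 0...0.  This is
   impossible: along any run from an accessible state, a second component equal to
   i forces the first one to be i mod p, so (0, 0) is the only accessible state
   with second component 0; and since b > 0, a second component different from 0
   (a positive integer or bot) is never sent back to 0. *)

From mathcomp Require Import all_boot.

Set Implicit Arguments.
Unset Strict Implicit.
Unset Printing Implicit Defensive.

Lemma run_invariant (A : DFA) (P : st A -> bool) :
  (forall x a, P x -> P (trans A x a)) ->
  forall x u, P x -> P (run x u).
Proof. by move=> Ptrans x u; elim: u x => [|a u IHu] x Px //=; apply/IHu/Ptrans. Qed.

Lemma run_nseq_fixpoint (A : DFA) (x : st A) (a n : nat) :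
  trans A x a = x -> run x (nseq n a) = x.
Proof. by move=> xa; elim: n => //= n; rewrite /run /= xa. Qed.

Section ProductAutomaton.

Variables (b p : nat) (R I : seq nat).

Local Notation C := (C_prod b R p I).

Definition C_coherent (x : nat * option nat) : bool :=
  if x.2 is Some i then x.1 == i %% p else true.

Lemma C_trans_coherent (x : st C) (a : nat) :
  C_coherent x -> C_coherent (trans C x a).
Proof.
case: x => s [i|] //; rewrite /C_coherent /= /B_trans /A_trans => /eqP ->.
by case: ifP => //= _; rewrite -modnDml modnMml modnDml.
Qed.

Lemma accessible_coherent (x : st C) : accessible b x -> C_coherent x.
Proof.
move=> [u [_ <-]]; apply: (@run_invariant C C_coherent C_trans_coherent).
by rewrite /C_coherent /= mod0n.
Qed.

Lemma C_run_zeros_init (n : nat) : run (init C) (nseq n 0) = init C.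
Proof. by apply: run_nseq_fixpoint; rewrite /= /A_trans /B_trans mod0n. Qed.

Lemma C_run_B_neq0 (x : st C) (u : seq nat) :
  0 < b -> x.2 != Some 0 -> (run x u).2 != Some 0.
Proof.
move=> b_gt0; apply: (@run_invariant C (fun y => y.2 != Some 0)).
move=> -[s [i|]] a //= i_neq0.
rewrite /B_trans; case: ifP => // _; apply: contra i_neq0 => /eqP[].
by move/eqP; rewrite addn_eq0 muln_eq0 (negPf (lt0n_neq0 b_gt0)) orbF => /andP[/eqP->].
Qed.

Lemma accessible_neq_init_B_neq0 (x : st C) :
  accessible b x -> x <> init C -> x.2 != Some 0.
Proof.
move=> /accessible_coherent; case: x => s [[|i]|] //.
by rewrite /C_coherent /= mod0n => /eqP-> [].
Qed.

End ProductAutomaton.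

Theorem lemma43 (b p : nat) (R I : seq nat) :
  1 < b -> 1 <= p -> all (fun r => r < p) R -> I != [::] ->
  forall x : st (C_prod b R p I),
    @accessible b (C_prod b R p I) x ->
    x <> init (C_prod b R p I) ->
    ~ @ult_equiv b (C_prod b R p I) (init (C_prod b R p I)) x.
Proof.
move=> b_gt1 _ _ _ x x_acc x_neq [m [_ eq_runs]].
have b_gt0 : 0 < b by apply: ltnW.
have zeros_over : word_over b (nseq m 0) by rewrite /word_over all_nseq b_gt0 orbT.
have := eq_runs _ zeros_over; rewrite size_nseq C_run_zeros_init.
move=> /(_ (leqnn m)) init_eq.
have := C_run_B_neq0 (nseq m 0) b_gt0 (accessible_neq_init_B_neq0 x_acc x_neq).
by rewrite -init_eq eqxx.
Qed.
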